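(* Let $C\le A$ be groups. An element $a\in A\setminus C$ is $2$-RF rel $C$ if and only if $aCa^{-1}\cap C=\{\mathrm{id}\}$. Consequently $(A,C)$ is $2$-RF if and only if $C$ is malnormal in $A$; in particular, if $(A,C)$ is $n$-RF for some $2\le n\le\infty$, then $C$ is malnormal in $A$.
   Context: For a group $G$, subgroup $D$, and $2\le n\le\infty$: $a\in G\setminus D$ is $n$-RF rel $D$ if $a^{e_1}d_1\cdots a^{e_k}d_k\ne\mathrm{id}$ for all $k\ge1$, $e_i\in\{\pm1\}$, $d_i\in D$ such that $d_i\ne\mathrm{id}$ whenever $e_i=-e_{i+1}$ (indices mod $k$), and fewer than $n$ of the $e_i$ are $+1$ and fewer than $n$ are $-1$. The pair $(G,D)$ is $n$-RF if every element of $G\setminus D$ is $n$-RF rel $D$. $C$ is malnormal in $A$ if $aCa^{-1}\cap C=\{\mathrm{id}\}$ for all $a\in A\setminus C$. *)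

From Stdlib Require Import List Arith Lia.
Import ListNotations.

Record Grp := {
  carrier :> Type;
  gmul : carrier -> carrier -> carrier;
  ginv : carrier -> carrier;
  gid : carrier;
  gmulA : forall x y z, gmul x (gmul y z) = gmul (gmul x y) z;
  gmul1l : forall x, gmul gid x = x;
  gmul1r : forall x, gmul x gid = x;
  gmulVl : forall x, gmul (ginv x) x = gid;
  gmulVr : forall x, gmul x (ginv x) = gid
}.

Arguments gmul {G} : rename.
Arguments ginv {G} : rename.
Arguments gid {G} : rename.

Definition is_subgroup (A : Grp) (C : A -> Prop) : Prop :=
  C gid /\ (forall x y, C x -> C y -> C (gmul x y)) /\ (forall x, C x -> C (ginv x)).

Inductive natinf := Fin (n : nat) | Inf.

Definition lt_inf (m : nat) (n : natinf) : Prop :=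
  match n with Fin k => m < k | Inf => True end.

Definition le_inf (m : nat) (n : natinf) : Prop :=
  match n with Fin k => m <= k | Inf => True end.

(* a^e with e = true meaning +1, false meaning -1 *)
Definition gpow1 {A : Grp} (a : A) (e : bool) : A := if e then a else ginv a.

(* the word a^{e_1} d_1 ... a^{e_k} d_k given as the list [(e_1,d_1);...;(e_k,d_k)] *)
Fixpoint word_val {A : Grp} (a : A) (w : list (bool * A)) : A :=
  match w with
  | [] => gid
  | (e, d) :: w' => gmul (gmul (gpow1 a e) d) (word_val a w')
  end.

(* cyclic reducedness: d_i <> id whenever e_i = - e_{i+1} (indices mod k) *)
Definition cyc_cond {A : Grp} (w : list (bool * A)) : Prop :=
  let k := length w in
  forall i, i < k ->
    fst (nth i w (true, gid)) = negb (fst (nth (S i mod k) w (true, gid))) ->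
    snd (nth i w (true, gid)) <> gid.

Definition count_sign {A : Grp} (s : bool) (w : list (bool * A)) : nat :=
  length (filter (fun p => Bool.eqb (fst p) s) w).

Definition n_RF_rel (A : Grp) (D : A -> Prop) (n : natinf) (a : A) : Prop :=
  ~ D a /\
  forall w : list (bool * A),
    1 <= length w ->
    (forall p, In p w -> D (snd p)) ->
    cyc_cond w ->
    lt_inf (count_sign true w) n ->
    lt_inf (count_sign false w) n ->
    word_val a w <> gid.

Definition pair_n_RF (A : Grp) (D : A -> Prop) (n : natinf) : Prop :=
  forall a : A, ~ D a -> n_RF_rel A D n a.

Definition malnormal (A : Grp) (C : A -> Prop) : Prop :=
  forall a : A, ~ C a ->
    forall x : A, ((exists c, C c /\ x = gmul (gmul a c) (ginv a)) /\ C x) <-> x = gid.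

(* A word with fewer than two letters of each sign is, up to cyclic
   conjugation, either a single letter [a^(+-1) d], which is trivial only if
   [a] lies in [C], or [a d a^-1 d'] with [d, d'] nontrivial, which is trivial
   exactly when [d' ^-1 = a d a^-1] is a nontrivial element of [a C a^-1 ∩ C].
   Since [n]-RF implies [2]-RF, every [n]-RF pair is malnormal. *)

From Stdlib Require Import List Lia Classical.
Import ListNotations.

Set Implicit Arguments.
Unset Strict Implicit.

Section GroupFacts.
Variable A : Grp.
Implicit Types a c x y : A.

Lemma mulg_eq1_invr x y : gmul x y = gid -> y = ginv x.
Proof.
  intro Hxy.
  now rewrite <- (gmul1l A y), <- (gmulVl A x), <- gmulA, Hxy, gmul1r.
Qed.

Lemma invgK x : ginv (ginv x) = x.
Proof. symmetry; apply mulg_eq1_invr, gmulVl. Qed.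

Lemma invg1 : ginv (@gid A) = gid.
Proof. symmetry; apply mulg_eq1_invr, gmul1l. Qed.

Lemma invg_eq1 x : ginv x = gid -> x = gid.
Proof. intro Hx; now rewrite <- (invgK x), Hx, invg1. Qed.

Lemma mulg_eq1C x y : gmul x y = gid -> gmul y x = gid.
Proof. intro Hxy; rewrite (mulg_eq1_invr Hxy); apply gmulVl. Qed.

Lemma conjg_eq1 a c : gmul (gmul a c) (ginv a) = gid -> c = gid.
Proof.
  intro Hac; apply mulg_eq1C in Hac.
  now rewrite gmulA, gmulVl, gmul1l in Hac.
Qed.

End GroupFacts.

Definition conj_meets_trivially (A : Grp) (C : A -> Prop) (a : A) : Prop :=
  forall x : A, ((exists c, C c /\ x = gmul (gmul a c) (ginv a)) /\ C x) <-> x = gid.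

Section Subgroup.
Variables (A : Grp) (C : A -> Prop).
Hypothesis HC : is_subgroup A C.

Lemma conj_meets_triviallyP a :
  conj_meets_trivially C a <->
  (forall c, C c -> C (gmul (gmul a c) (ginv a)) -> c = gid).
Proof.
  destruct HC as [C1 _].
  split.
  - intros Hmeet c Cc Cac.
    apply (conjg_eq1 (a := a)), Hmeet.
    split; [exists c; auto | exact Cac].
  - intros Hmeet x; split.
    + intros [[c [Cc ->]] Cx].
      now rewrite (Hmeet c Cc Cx), gmul1r, gmulVr.
    + intros ->; split; [exists gid | exact C1].
      now rewrite gmul1r, gmulVr.
Qed.

Lemma subgroup_gpow1 a e : C (gpow1 a e) -> C a.
Proof.
  destruct HC as (_ & _ & CV).
  destruct e; simpl; [easy |].
  intro Cai; rewrite <- (invgK a); auto.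
Qed.

End Subgroup.

Section Words.
Variable A : Grp.
Implicit Types (a d : A) (e : bool) (w : list (bool * A)).

Lemma word_val_pair a e1 d1 e2 d2 :
  word_val a [(e1, d1); (e2, d2)] =
  gmul (gmul (gpow1 a e1) d1) (gmul (gpow1 a e2) d2).
Proof. simpl; now rewrite gmul1r. Qed.

Lemma cyc_cond_alternating_pair e d1 d2 :
  cyc_cond [(e, d1); (negb e, d2)] <-> d1 <> gid /\ d2 <> gid.
Proof.
  split.
  - intro Hcyc; split.
    + apply (Hcyc 0); simpl; [lia | now rewrite Bool.negb_involutive].
    + apply (Hcyc 1); simpl; [lia | easy].
  - intros [Hd1 Hd2] [|[|i]] Hi _; simpl in *; [easy | easy | lia].
Qed.

Lemma count_sign_alternating_pair s e d1 d2 :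
  count_sign s [(e, d1); (negb e, d2)] = 1.
Proof. now destruct s, e. Qed.

Lemma short_word_cases w :
  1 <= length w -> count_sign true w < 2 -> count_sign false w < 2 ->
  (exists e d, w = [(e, d)]) \/
  (exists e d1 d2, w = [(e, d1); (negb e, d2)]).
Proof.
  unfold count_sign.
  destruct w as [|[e1 d1] [|[e2 d2] [|[e3 d3] w]]]; simpl; intros Hlen Ht Hf.
  - lia.
  - left; eauto.
  - right; exists e1, d1, d2.
    destruct e1, e2; simpl in *; [lia | easy | easy | lia].
  - destruct e1, e2, e3; simpl in *; lia.
Qed.

Lemma n_RF_rel_le (D : A -> Prop) (k : nat) (n : natinf) a :
  le_inf k n -> n_RF_rel A D n a -> n_RF_rel A D (Fin k) a.
Proof.
  intros Hkn [Da HRF]; split; [exact Da |].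
  intros w Hlen Hw Hcyc Ht Hf.
  apply HRF; auto; destruct n; simpl in *; auto; lia.
Qed.

End Words.

Section TwoRF.
Variables (A : Grp) (C : A -> Prop).
Hypothesis HC : is_subgroup A C.

Lemma two_RF_rel_conj_meets_trivially a :
  n_RF_rel A C (Fin 2) a -> conj_meets_trivially C a.
Proof.
  destruct HC as (_ & _ & CV).
  intros [_ HRF]; apply (conj_meets_triviallyP HC).
  intros c Cc Cac; apply NNPP; intro Hc.
  set (x := gmul (gmul a c) (ginv a)) in *.
  apply (HRF [(true, c); (false, ginv x)]).
  - simpl; lia.
  - intros p [<- | [<- | []]]; simpl; auto.
  - apply cyc_cond_alternating_pair; split; [exact Hc |].
    intro Hx; apply invg_eq1, conjg_eq1 in Hx; contradiction.
  - rewrite count_sign_alternating_pair; simpl; lia.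
  - rewrite count_sign_alternating_pair; simpl; lia.
  - rewrite word_val_pair; simpl.
    now rewrite gmulA, gmulVr.
Qed.

Lemma conj_meets_trivially_two_RF_rel a :
  ~ C a -> conj_meets_trivially C a -> n_RF_rel A C (Fin 2) a.
Proof.
  destruct HC as (_ & _ & CV).
  intros Ca Hmeet; rewrite (conj_meets_triviallyP HC) in Hmeet.
  split; [exact Ca |].
  intros w Hlen Hw Hcyc Ht Hf.
  destruct (short_word_cases Hlen Ht Hf) as [[e [d ->]] | [e [d1 [d2 ->]]]].
  - simpl; rewrite gmul1r; intro Hword.
    apply Ca, (subgroup_gpow1 HC (e := e)).
    rewrite <- (invgK (gpow1 a e)), <- (mulg_eq1_invr Hword).
    apply CV, (Hw (e, d)); simpl; auto.
  - assert (Cd1 : C d1) by (apply (Hw (e, d1)); simpl; auto).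
    assert (Cd2 : C d2) by (apply (Hw (negb e, d2)); simpl; auto).
    apply cyc_cond_alternating_pair in Hcyc as [Hd1 Hd2].
    rewrite word_val_pair; intro Hword.
    (* Up to cyclic rotation the word is [a d a^-1 d'], so [a d a^-1 = d'^-1] lies in [C]. *)
    assert (Hconj : forall d d', C d -> C d' -> d' <> gid ->
              gmul (gmul a d) (gmul (ginv a) d') <> gid).
    { intros d d' Cd Cd' Hd' H.
      rewrite gmulA in H; apply mulg_eq1_invr in H.
      assert (Hd : d = gid).
      { apply Hmeet; [exact Cd |].
        rewrite <- (invgK (gmul (gmul a d) (ginv a))), <- H; apply CV, Cd'. }
      apply Hd'; now rewrite H, Hd, gmul1r, gmulVr, invg1. }
    destruct e; simpl in Hword.
    + exact (Hconj d1 d2 Cd1 Cd2 Hd2 Hword).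
    + apply (Hconj d2 d1 Cd2 Cd1 Hd1).
      apply mulg_eq1C in Hword.
      now rewrite !gmulA, <- (gmulA A (gmul a d2)) in Hword.
Qed.

End TwoRF.

Theorem lemma5p22 (A : Grp) (C : A -> Prop) (HC : is_subgroup A C) :
  (forall a : A, ~ C a ->
     (n_RF_rel A C (Fin 2) a <->
      (forall x : A, ((exists c, C c /\ x = gmul (gmul a c) (ginv a)) /\ C x) <-> x = gid)))
  /\ (pair_n_RF A C (Fin 2) <-> malnormal A C)
  /\ (forall n : natinf, le_inf 2 n -> pair_n_RF A C n -> malnormal A C).
Proof.
  assert (Helt : forall a, ~ C a ->
            n_RF_rel A C (Fin 2) a <-> conj_meets_trivially C a).
  { intros a Ca; split.
    - apply (two_RF_rel_conj_meets_trivially HC).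
    - apply (conj_meets_trivially_two_RF_rel HC Ca). }
  assert (Hpair : pair_n_RF A C (Fin 2) <-> malnormal A C).
  { split; intros H a Ca; apply (Helt a Ca); exact (H a Ca). }
  split; [exact Helt |]; split; [exact Hpair |].
  intros n Hn HRF; apply Hpair; intros a Ca.
  exact (n_RF_rel_le Hn (HRF a Ca)).
Qed.
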